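(* Let $G=(X,E)$ be a finite connected graph with $n=|X|$, $W:X\to\mathbb{R}$, and let $w_1\ge w_2\ge\dots\ge w_n$ be the values of $W$ listed with multiplicity in decreasing order. For each real $Q$ let $\lambda_1\le\dots\le\lambda_n$ be the eigenvalues of $H=\Delta-QW$ and $\psi_1,\dots,\psi_n$ a corresponding orthonormal basis of eigenvectors (any choice). Then for every $i$ and every vertex $v$ with $W(v)\neq w_i$, $\psi_i(v)\to0$ as $Q\to\infty$.
   Context: $\Delta$ is the symmetrized Laplacian: $\Delta(v,v)=1$, $\Delta(v,w)=-1/\sqrt{d_vd_w}$ if $vw\in E$ ($d_v$ the degree), $0$ otherwise; $W$ is identified with the diagonal matrix $\mathrm{diag}(W(v))$. *)

From HB Require Import structures.
From mathcomp Require Import all_boot all_order all_algebra.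
From mathcomp Require Import all_classical all_reals all_analysis.
Set Implicit Arguments. Unset Strict Implicit. Unset Printing Implicit Defensive.
Import Order.TTheory GRing.Theory Num.Theory.
Local Open Scope ring_scope.

Definition simple_graph (n : nat) (e : rel 'I_n) : Prop :=
  irreflexive e /\ symmetric e.

Definition connected_graph (n : nat) (e : rel 'I_n) : Prop :=
  forall u v : 'I_n, connect e u v.

Definition deg (n : nat) (e : rel 'I_n) (v : 'I_n) : nat := #|[set w | e v w]|.

Definition sLaplacian (R : rcfType) (n : nat) (e : rel 'I_n) : 'M[R]_n :=
  \matrix_(i, j)
    (if i == j then 1
     else if e i j then - (Num.sqrt ((deg e i)%:R * (deg e j)%:R))^-1
     else 0).

Definition diagW (R : pzRingType) (n : nat) (W : 'I_n -> R) : 'M[R]_n :=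
  \matrix_(i, j) (W i *+ (i == j)).

Definition Hop (R : rcfType) (n : nat) (e : rel 'I_n) (W : 'I_n -> R) (Q : R)
  : 'M[R]_n := sLaplacian R e - Q *: diagW W.

(* w_1 >= ... >= w_n : values of W with multiplicity, decreasing; index i is 0-based *)
Definition wsorted (R : realDomainType) (n : nat) (W : 'I_n -> R) (i : 'I_n) : R :=
  nth 0 (sort (fun x y : R => y <= x) [seq W v | v <- enum 'I_n]) i.

(* P has orthonormal columns which are eigenvectors of H with eigenvalues lam,
   listed in nondecreasing order: column i of P is psi_(i+1). *)
Definition ordered_orthonormal_eigenbasis (R : rcfType) (n : nat)
  (H : 'M[R]_n) (lam : 'I_n -> R) (P : 'M[R]_n) : Prop :=
  [/\ P^T *m P = 1%:M,
      forall i : 'I_n, H *m col i P = lam i *: col i P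
    & forall i j : 'I_n, (i <= j)%N -> lam i <= lam j].

From mathcomp Require Import all_boot all_order all_algebra.
From mathcomp Require Import all_classical all_reals all_analysis.
From mathcomp Require Import ring lra.
Set Implicit Arguments. Unset Strict Implicit. Unset Printing Implicit Defensive.
Import Order.TTheory GRing.Theory Num.Theory numFieldNormedType.Exports.
Local Open Scope classical_set_scope.
Local Open Scope ring_scope.

(* Every column k of psi has a peak vertex v_k carrying mass at least 1/n.
   Reading the eigenvalue equation at v_k shows that lambda_k + Q W(v_k) stays
   bounded, so at every vertex v with W(v) <> W(v_k) the same equation forces
   psi_k(v) = O(1/Q).  Hence for large Q the columns are concentrated on the
   level sets of W, which gives (i) k |-> W(v_k) is nonincreasing, because the
   lambda_k are nondecreasing, and (ii) each value of W is attained by as many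
   peaks as vertices, by comparing the row and column sums of the orthogonal
   matrix psi restricted to a level set.  Together, W(v_k) is the k-th largest
   value w_k of W, and psi_k(v) = O(1/Q) whenever W(v) <> w_k. *)

Lemma natr_dist_lt1_eq (R : realDomainType) (a b : nat) :
  `|a%:R - b%:R : R| < 1 -> a = b.
Proof.
rewrite ltr_norml => /andP[lo hi]; apply/eqP; rewrite eqn_leq.
apply/andP; split; rewrite leqNgt; apply/negP => lt.
- have : b.+1%:R <= a%:R :> R by rewrite ler_nat.
  by rewrite -natr1; lra.
- have : a.+1%:R <= b%:R :> R by rewrite ler_nat.
  by rewrite -natr1; lra.
Qed.

Section Orthogonal.
Variables (R : realFieldType) (n : nat) (P : 'M[R]_n).
Hypothesis P_orth : P^T *m P = 1%:M.

Lemma orthogonal_col_norm k : \sum_v P v k ^+ 2 = 1.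
Proof.
have := congr1 (fun M : 'M[R]_n => M k k) P_orth => /=.
by rewrite !mxE eqxx mulr1n => <-; apply: eq_bigr => v _; rewrite mxE expr2.
Qed.

Lemma orthogonal_row_norm v : \sum_k P v k ^+ 2 = 1.
Proof.
have := congr1 (fun M : 'M[R]_n => M v v) (mulmx1C P_orth) => /=.
by rewrite !mxE eqxx mulr1n => <-; apply: eq_bigr => k _; rewrite mxE expr2.
Qed.

Lemma orthogonal_entry_le1 v k : `|P v k| <= 1.
Proof.
have := orthogonal_col_norm k; rewrite (bigD1 v) //= => col_k.
rewrite -(expr_le1 (n := 2)) // real_normK ?num_real // -col_k lerDl.
by apply: sumr_ge0 => j _; exact: sqr_ge0.
Qed.

(* If the row labels a and the column labels b of an orthogonal matrix only
   meet where the entries are small, the two labellings have the same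
   multiplicities: counting the squared entries of the block selected by a
   label x by rows and by columns gives #{j | a j = x} and #{k | b k = x}
   up to an error smaller than 1. *)
Lemma orthogonal_labels_perm_eq (T : eqType) (a b : 'I_n -> T) (eps : R) :
  0 <= eps -> (forall j k, a j != b k -> P j k ^+ 2 <= eps) ->
  n%:R * n%:R * eps < 1 ->
  perm_eq [seq a j | j <- enum 'I_n] [seq b k | k <- enum 'I_n].
Proof.
move=> eps_ge0 small eps_small; apply/allP => x _; apply/eqP.
rewrite !count_map -!sum1_count.
suff counts : (\sum_(j | a j == x) 1)%N = (\sum_(k | b k == x) 1)%N.
  by move: counts; rewrite /index_enum; unlock.
apply: (@natr_dist_lt1_eq R); rewrite !natr_sum.
have rows : \sum_(j | a j == x) (1 : R)
    = \sum_k \sum_j (if a j == x then P j k ^+ 2 else 0).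
  rewrite exchange_big big_mkcond; apply: eq_bigr => j _ /=.
  by case: ifP => _; [rewrite orthogonal_row_norm | rewrite big1].
have cols : \sum_(k | b k == x) (1 : R)
    = \sum_k \sum_j (if b k == x then P j k ^+ 2 else 0).
  rewrite big_mkcond; apply: eq_bigr => k _.
  by case: ifP => _; [rewrite orthogonal_col_norm | rewrite big1].
rewrite rows cols -sumrB; apply: le_lt_trans eps_small.
apply: le_trans (ler_norm_sum _ _ _) _.
apply: le_trans (_ : \sum_(k < n) \sum_(j < n) eps <= _); last first.
  by rewrite !sumr_const card_ord -mulrA !mulr_natl.
apply: ler_sum => k _; rewrite -sumrB.
apply: le_trans (ler_norm_sum _ _ _) _; apply: ler_sum => j _.
case: (eqVneq (a j) x) => ajx; case: (eqVneq (b k) x) => bkx /=.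
- by rewrite subrr normr0.
- by rewrite subr0 ger0_norm ?sqr_ge0 //; apply: small; rewrite ajx eq_sym.
- by rewrite sub0r normrN ger0_norm ?sqr_ge0 //; apply: small; rewrite bkx.
- by rewrite subrr normr0.
Qed.

End Orthogonal.

Lemma sort_ge_perm_nonincreasing (R : realDomainType) (n : nat)
    (u : 'I_n -> R) (s : seq R) (i : 'I_n) :
  (forall k k' : 'I_n, (k <= k')%N -> u k' <= u k) ->
  perm_eq s [seq u k | k <- enum 'I_n] ->
  nth 0 (sort (fun x y : R => y <= x) s) i = u i.
Proof.
move=> u_noninc perm_s.
have ge_total : total (fun x y : R => y <= x) by move=> x y; exact: le_total.
have ge_trans : transitive (fun x y : R => y <= x).
  by move=> x y z yx zy; exact: le_trans zy yx.
have ge_anti : antisymmetric (fun x y : R => y <= x).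
  by move=> x y /andP[yx xy]; apply: le_anti; rewrite xy yx.
have u_sorted : sorted (fun x y : R => y <= x) [seq u k | k <- enum 'I_n].
  apply: (@homo_sorted _ _ _ (fun k k' : 'I_n => (k <= k')%N)) => //.
  by have := iota_sorted 0 n; rewrite -val_enum_ord sorted_map.
rewrite (perm_sortP ge_total ge_trans ge_anti _ _ perm_s).
by rewrite (sorted_sort ge_trans u_sorted) (nth_map i) ?size_enum_ord ?nth_ord_enum.
Qed.

Lemma eigvec_row_eq (R : comPzRingType) (n : nat) (D : 'M[R]_n)
    (W : 'I_n -> R) (Q l : R) (P : 'M[R]_n) (k v : 'I_n) :
  (D - Q *: diagW W) *m col k P = l *: col k P ->
  (l + Q * W v) * P v k = \sum_j D v j * P j k.
Proof.
move/matrixP/(_ v ord0); rewrite !mxE mulrDl => <-.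
under eq_bigr do rewrite !mxE mulrBl.
rewrite sumrB [X in _ - X + _](bigD1 v) //= eqxx mulr1n.
rewrite [X in _ - (_ + X) + _]big1 ?addr0 ?subrK // => j /negbTE.
by rewrite eq_sym => ->; rewrite mulr0n mulr0 mul0r.
Qed.

Lemma exists_row_abs_sum_bound (R : realDomainType) (n : nat) (D : 'M[R]_n) :
  exists2 C : R, 0 <= C & forall v, \sum_j `|D v j| <= C.
Proof.
exists (\sum_v \sum_j `|D v j|) => [|v]; first by do 2!apply: sumr_ge0 => ? _.
rewrite [leRHS](bigD1 v) //= lerDl.
by apply: sumr_ge0 => ? _; apply: sumr_ge0.
Qed.

Lemma exists_level_gap (R : realDomainType) (T : finType) (W : T -> R) :
  exists2 g : R, 0 < g & forall a b, W a != W b -> g <= `|W a - W b|.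
Proof.
exists (\big[Num.min/1]_(p : T * T | W p.1 != W p.2) `|W p.1 - W p.2|).
  apply: (big_ind (fun x => 0 < x)) => // [x y x0 y0 | p Wp].
    by rewrite lt_min x0 y0.
  by rewrite normr_gt0 subr_eq0.
by move=> a b Wab; rewrite (bigD1 (a, b)) //= ge_min lexx.
Qed.

Section Concentration.
Variables (R : realFieldType) (n : nat) (D : 'M[R]_n) (W : 'I_n -> R).
Variables (Q C g : R) (lam : 'I_n -> R) (P : 'M[R]_n).
Hypotheses (P_orth : P^T *m P = 1%:M)
  (P_eig : forall k, (D - Q *: diagW W) *m col k P = lam k *: col k P)
  (lam_nondecreasing : forall k k' : 'I_n, (k <= k')%N -> lam k <= lam k').
Hypotheses (D_rows : forall v, \sum_j `|D v j| <= C) (C_ge0 : 0 <= C)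
  (W_gap : forall v v', W v != W v' -> g <= `|W v - W v'|)
  (Q_ge0 : 0 <= Q) (Q_large : 3%:R * n%:R * C + 1 <= Q * g).

Lemma eigvec_entry_bound k v : `|lam k + Q * W v| * `|P v k| <= C.
Proof.
rewrite -normrM (eigvec_row_eq v (P_eig k)).
apply: le_trans (ler_norm_sum _ _ _) (le_trans _ (D_rows v)).
apply: ler_sum => j _; rewrite normrM -[leRHS]mulr1 ler_wpM2l //.
exact: orthogonal_entry_le1.
Qed.

Definition peak (k : 'I_n) : 'I_n := [arg max_(j > k) P j k ^+ 2]%O.

Lemma peak_max k j : P j k ^+ 2 <= P (peak k) k ^+ 2.
Proof. by rewrite /peak; case: arg_maxP => // m _; apply. Qed.

Lemma peak_mass k : 1 <= n%:R * `|P (peak k) k|.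
Proof.
rewrite -[leLHS](orthogonal_col_norm P_orth k).
apply: le_trans (ler_sum _ (fun j _ => peak_max k j)) _.
rewrite sumr_const card_ord mulr_natl; apply: ler_wMn2r.
by rewrite -real_normK ?num_real // expr2 ler_piMr ?orthogonal_entry_le1.
Qed.

Lemma eigenvalue_near_peak_level k : `|lam k + Q * W (peak k)| <= n%:R * C.
Proof.
set x := `|_|; apply: le_trans (_ : x * (n%:R * `|P (peak k) k|) <= _).
  exact: ler_peMr (normr_ge0 _) (peak_mass k).
by rewrite mulrCA ler_wpM2l // eigvec_entry_bound.
Qed.

Let d := Q * g - n%:R * C.

Lemma nC_lt_d : n%:R * C < d.
Proof.
have := Q_large; have : 0 <= n%:R * C by rewrite mulr_ge0.
by rewrite /d; lra.
Qed.

Lemma d_gt0 : 0 < d.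
Proof. exact: le_lt_trans (mulr_ge0 (ler0n _ n) C_ge0) nC_lt_d. Qed.

Lemma eigvec_small_off_peak_level k j : W j != W (peak k) -> `|P j k| <= C / d.
Proof.
move=> Wj.
have gap : Q * g <= Q * `|W j - W (peak k)| by rewrite ler_wpM2l // W_gap.
have tri : Q * `|W j - W (peak k)|
    <= `|lam k + Q * W j| + `|lam k + Q * W (peak k)|.
  rewrite -[Q in Q * _]ger0_norm // -normrM.
  have -> : Q * (W j - W (peak k)) = (lam k + Q * W j) - (lam k + Q * W (peak k)).
    by ring.
  exact: ler_normB.
have near := eigenvalue_near_peak_level k.
rewrite ler_pdivlMr ?d_gt0 // mulrC; apply: le_trans (eigvec_entry_bound k j).
by rewrite ler_wpM2r // /d; lra.
Qed.

Lemma peak_level_nonincreasing (k k' : 'I_n) :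
  (k <= k')%N -> W (peak k') <= W (peak k).
Proof.
move=> le_kk'; rewrite leNgt; apply/negP => lt_levels.
have := W_gap (negbT (gt_eqF lt_levels)); rewrite gtr0_norm ?subr_gt0 // => gap.
have := ler_wpM2l Q_ge0 gap; rewrite mulrBr.
have := eigenvalue_near_peak_level k; have := eigenvalue_near_peak_level k'.
have := lam_nondecreasing le_kk'; have := Q_large.
rewrite !ler_norml; lra.
Qed.

Lemma perm_eq_peak_levels :
  perm_eq [seq W j | j <- enum 'I_n] [seq W (peak k) | k <- enum 'I_n].
Proof.
have Cd_ge0 : 0 <= C / d by rewrite divr_ge0 // ltW ?d_gt0.
have nCd_lt1 : n%:R * (C / d) < 1 by rewrite mulrA ltr_pdivrMr ?d_gt0 ?mul1r ?nC_lt_d.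
apply: (orthogonal_labels_perm_eq P_orth (eps := (C / d) ^+ 2)).
- exact: sqr_ge0.
- move=> j k Wj; rewrite -real_normK ?num_real // ler_sqr ?nnegrE //.
  exact: eigvec_small_off_peak_level.
- have -> : n%:R * n%:R * (C / d) ^+ 2 = n%:R * (C / d) * (n%:R * (C / d)).
    by ring.
  apply: le_lt_trans (ler_piMr _ (ltW nCd_lt1)) nCd_lt1.
  exact: mulr_ge0 (ler0n _ n) Cd_ge0.
Qed.

Lemma wsorted_peak_level (i : 'I_n) : wsorted W i = W (peak i).
Proof.
apply: sort_ge_perm_nonincreasing perm_eq_peak_levels.
exact: peak_level_nonincreasing.
Qed.

Lemma eigvec_entry_decay (i v : 'I_n) :
  W v != wsorted W i -> `|P v i| <= C / (Q * g - n%:R * C).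
Proof. by rewrite wsorted_peak_level; exact: eigvec_small_off_peak_level. Qed.

End Concentration.

Theorem lemma1 (R : realType) (n : nat) (e : rel 'I_n) (W : 'I_n -> R)
  (lam : R -> 'I_n -> R) (psi : R -> 'M[R]_n) :
  simple_graph e -> connected_graph e ->
  (forall Q : R, ordered_orthonormal_eigenbasis (Hop e W Q) (lam Q) (psi Q)) ->
  forall (i v : 'I_n), W v <> wsorted W i ->
    psi Q v i @[Q --> +oo] --> 0.
Proof.
move=> _ _ eigenbasis i v /eqP Wv.
have [C C_ge0 D_rows] := exists_row_abs_sum_bound (sLaplacian R e).
have [g g_gt0 W_gap] := exists_level_gap W.
set N : R := n%:R; have NC_ge0 : 0 <= N * C by rewrite mulr_ge0.
apply/cvgrPdist_lt => eps eps_gt0.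
exists ((3%:R * N * C + 1 + C / eps) / g); split; first by rewrite num_real.
move=> Q; rewrite ltr_pdivrMr // => Q_large.
have Ceps_ge0 : 0 <= C / eps by rewrite divr_ge0 // ltW.
have Q_ge0 : 0 <= Q by rewrite -(pmulr_lge0 _ g_gt0); lra.
have [P_orth P_eig lam_nondecreasing] := eigenbasis Q.
rewrite sub0r normrN; apply: le_lt_trans (eigvec_entry_decay P_orth P_eig
  lam_nondecreasing D_rows C_ge0 W_gap Q_ge0 _ Wv) _; first by lra.
have d_gt0 : 0 < Q * g - N * C by lra.
rewrite ltr_pdivrMr // -[C in C < _](mulfVK (lt0r_neq0 eps_gt0)).
by rewrite mulrC ltr_pM2l //; lra.
Qed.
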